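(* Consider the game among $N$ domains $i = 1,\dots,N$ in which domain $i$ chooses quality $q_i \in [0,1]$ and generality $g_i \in [0,1]$ and receives payoff \[ \pi_i = \alpha_i q_i (1 + \beta g_i) + \lambda \sum_{j \neq i} q_j g_j - \Big(\tfrac{\gamma_q}{2} q_i^2 + \tfrac{\gamma_g}{2} g_i^2 q_i + \kappa g_i\Big), \] with parameters $\alpha_i > 0$, $\beta \ge 0$, $\lambda > 0$, $\gamma_q, \gamma_g > 0$, $\kappa \ge 0$. Let $(q_i^*, g_i^{NE})_{i=1}^N$ be a Nash equilibrium with $q_i^* > 0$ for all $i$. If $\alpha_i \beta < \kappa / q_i^*$ for all domains $i$, then $g_i^{NE} = 0$ for all $i$.
   Context: The model describes an organization with $N$ domain teams producing data products; $q_i$ is the quality and $g_i$ the cross-domain generality of domain $i$'s product. The situation $g_i^{NE}=0$ for all $i$ is called the ''data mesh trap''. *)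

From mathcomp Require Import all_boot all_order all_algebra.
Set Implicit Arguments. Unset Strict Implicit. Unset Printing Implicit Defensive.
Import Order.TTheory GRing.Theory Num.Theory.
Local Open Scope ring_scope.

Definition payoff (R : realFieldType) (N : nat) (alpha : 'I_N -> R)
  (beta lambda gq gg kappa : R) (q g : 'I_N -> R) (i : 'I_N) : R :=
  alpha i * q i * (1 + beta * g i)
  + lambda * (\sum_(j < N | j != i) q j * g j)
  - (gq / 2 * q i ^+ 2 + gg / 2 * g i ^+ 2 * q i + kappa * g i).

Definition upd (R : realFieldType) (N : nat) (f : 'I_N -> R) (i : 'I_N) (x : R)
  : 'I_N -> R := fun j => if j == i then x else f j.

Definition is_nash (R : realFieldType) (N : nat) (alpha : 'I_N -> R)
  (beta lambda gq gg kappa : R) (q g : 'I_N -> R) : Prop :=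
  (forall i, 0 <= q i <= 1 /\ 0 <= g i <= 1) /\
  (forall i (qi gi : R), 0 <= qi <= 1 -> 0 <= gi <= 1 ->
     payoff alpha beta lambda gq gg kappa (upd q i qi) (upd g i gi) i
     <= payoff alpha beta lambda gq gg kappa q g i).

From mathcomp Require Import all_boot all_order all_algebra.
From mathcomp Require Import lra.
Set Implicit Arguments. Unset Strict Implicit. Unset Printing Implicit Defensive.
Import Order.TTheory GRing.Theory Num.Theory.
Local Open Scope ring_scope.

(* Generality enters domain i's own payoff only through
   [g_i (alpha_i q_i beta - gg/2 g_i q_i - kappa)]; the spillover term
   [lambda * sum_(j != i) q_j g_j] does not depend on [g_i].  When
   [alpha_i q_i beta < kappa] that bracket is negative for every [g_i > 0],
   so resetting [g_i] to 0 at fixed [q_i] is a strictly profitable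
   deviation unless [g_i] is already 0. *)

Lemma upd_eq (R : realFieldType) (N : nat) (f : 'I_N -> R) i x :
  upd f i x i = x.
Proof. by rewrite /upd eqxx. Qed.

Lemma upd_neq (R : realFieldType) (N : nat) (f : 'I_N -> R) i x j :
  j != i -> upd f i x j = f j.
Proof. by rewrite /upd => /negbTE ->. Qed.

Section OwnGenerality.

Variables (R : realFieldType) (N : nat) (alpha : 'I_N -> R).
Variables (beta lambda gq gg kappa : R).

Local Notation payoff := (payoff alpha beta lambda gq gg kappa).

Lemma payoff_drop_generality (q g : 'I_N -> R) i :
  payoff (upd q i (q i)) (upd g i 0) i =
  payoff q g i - g i * (alpha i * q i * beta - gg / 2 * g i * q i - kappa).
Proof.
have spillover : \sum_(j < N | j != i) upd q i (q i) j * upd g i 0 j =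
                 \sum_(j < N | j != i) q j * g j.
  by apply: eq_bigr => j ji; rewrite !upd_neq.
rewrite /payoff spillover !upd_eq; lra.
Qed.

Lemma nash_generality_eq0 (q g : 'I_N -> R) i :
  0 <= gg -> is_nash alpha beta lambda gq gg kappa q g ->
  alpha i * q i * beta < kappa -> g i = 0.
Proof.
move=> gg_ge0 [bounds best_resp] cost_dominates.
have [q_in01 /andP[g_ge0 _]] := bounds i.
have zero_in01 : 0 <= (0 : R) <= 1 by rewrite lexx ler01.
have := best_resp i (q i) 0 q_in01 zero_in01.
rewrite payoff_drop_generality gerDl oppr_le0 => gain_ge0.
have q_ge0 : 0 <= q i by case/andP: q_in01.
apply/eqP; rewrite eq_le g_ge0 andbT leNgt; apply/negP => g_gt0.
have gain_lt0 : g i * (alpha i * q i * beta - gg / 2 * g i * q i - kappa) < 0.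
  rewrite pmulr_rlt0 //.
  have : 0 <= gg / 2 * g i * q i by rewrite !mulr_ge0 ?invr_ge0 ?ler0n ?(ltW g_gt0).
  lra.
by rewrite ltNge gain_ge0 in gain_lt0.
Qed.

End OwnGenerality.

Theorem corollary1 (R : realFieldType) (N : nat) (alpha : 'I_N -> R)
  (beta lambda gq gg kappa : R) (qstar gNE : 'I_N -> R) :
  (forall i, 0 < alpha i) -> 0 <= beta -> 0 < lambda -> 0 < gq -> 0 < gg ->
  0 <= kappa ->
  is_nash alpha beta lambda gq gg kappa qstar gNE ->
  (forall i, 0 < qstar i) ->
  (forall i, alpha i * beta < kappa / qstar i) ->
  forall i, gNE i = 0.
Proof.
move=> _ _ _ _ gg_gt0 _ nash q_gt0 trap i.
apply: (nash_generality_eq0 (ltW gg_gt0) nash).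
by rewrite mulrAC -ltr_pdivlMr.
Qed.
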